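(* Let $p_1\in[0,1]$, $\alpha_1=2p_1-1$, and let $d_n(k)$ and $\tilde S^{(k)}$ be as in the context. Then, as $n\to\infty$, $$\sum_{k=1}^n\mathbb E\big(\tilde S^{(k)}_{d_n(k)}\big)^2=n(1+2\alpha_1^2)+O(\log^2 n).$$
   Context: Let $(u_j)_{j\ge1}$ be independent random variables with $u_j$ uniform on $\{1,\dots,j\}$. For $n\ge k\ge1$ let $d_n(k):=\#\{j\in\{k,\dots,n-1\}:u_j=k\}$ (so $d_n(n)=0$); i.e. $d_n(k)$ is the out-degree of vertex $k$ in the random recursive tree on $\{1,\dots,n\}$ where vertex $j+1$ attaches to $u_j$. Let $(\tilde S^{(k)})_{k\ge1}$ be independent random walks, independent of $(u_j)$, each with $\tilde S^{(k)}_0=0$ and i.i.d. increments equal to $+1$ with probability $p_1$ and $-1$ with probability $1-p_1$. *)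

From HB Require Import structures.
From mathcomp Require Import all_boot all_order all_algebra.
From mathcomp Require Import reals exp.
Set Implicit Arguments. Unset Strict Implicit. Unset Printing Implicit Defensive.
Import Order.TTheory GRing.Theory Num.Theory.
Local Open Scope ring_scope.

(* Finite model of (u_1,...,u_{n-1}): a function u : 'I_(n-1) -> 'I_n where
   index i (0-based) stands for j = i+1 and value u i stands for u_j = (u i)+1.
   Valid configurations satisfy u i <= i, i.e. u_j in {1,...,j}. *)
Definition rrt_valid (n : nat) (u : {ffun 'I_n.-1 -> 'I_n}) : bool :=
  [forall i, (nat_of_ord (u i) <= nat_of_ord i)%N].

Definition rrt_prob (R : realType) (n : nat) (u : {ffun 'I_n.-1 -> 'I_n}) : R :=
  if rrt_valid u then \prod_(i < n.-1) (i.+1%:R)^-1 else 0.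

(* d_n(k) = #{ j in {k..n-1} : u_j = k }, for k >= 1 (1-based vertex label). *)
Definition outdeg (n : nat) (u : {ffun 'I_n.-1 -> 'I_n}) (k : nat) : nat :=
  #|[set i : 'I_n.-1 | (nat_of_ord (u i) == k.-1)%N]|.

Definition step_prob (R : realType) (p : R) (n : nat)
    (eps : {ffun 'I_n.-1 -> bool}) : R :=
  \prod_(i < n.-1) (if eps i then p else 1 - p).

Definition walk_pos (R : realType) (n : nat) (eps : {ffun 'I_n.-1 -> bool})
    (m : nat) : R :=
  \sum_(i < n.-1 | (nat_of_ord i < m)%N) (if eps i then 1 else -1).

(* E( S^{(k)}_{d_n(k)} )^2, computed over the (finite) joint law of
   (u_1..u_{n-1}) and the first n-1 increments of the independent walk S^{(k)}
   (only these matter since d_n(k) <= n-1). *)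
Definition ES2 (R : realType) (p : R) (n k : nat) : R :=
  \sum_(u : {ffun 'I_n.-1 -> 'I_n}) \sum_(eps : {ffun 'I_n.-1 -> bool})
    @rrt_prob R n u * @step_prob R p n eps * (@walk_pos R n eps (outdeg u k)) ^+ 2.

From HB Require Import structures.
From mathcomp Require Import all_boot all_order all_algebra.
From mathcomp Require Import reals exp sequences.
From mathcomp Require Import ring lra.
Import Order.TTheory GRing.Theory Num.Theory.
Local Open Scope ring_scope.

(* Given the tree, a walk with drift alpha = 2 p - 1 satisfies
   E (S_m)^2 = m (1 - alpha^2) + m^2 alpha^2, so the sum equals
   (1 - alpha^2) E sum_k d_n(k) + alpha^2 E sum_k d_n(k)^2.  The out-degrees
   always add up to n - 1, and sum_k d_n(k)^2 counts the ordered pairs (i, j)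
   of attachment steps with u_i = u_j; for i <> j this has probability
   1 / max(i, j), whence E sum_k d_n(k)^2 = 3 (n - 1) - 2 H_(n-1).  The sum is
   therefore exactly (n - 1)(1 + 2 alpha^2) - 2 alpha^2 H_(n-1), and
   H_(n-1) <= 1 + ln n. *)

Lemma sum_prod_weight_pair {R : comNzRingType} {I J : finType} {w : I -> J -> R}
    (w1 : forall i, \sum_j w i j = 1) (a b : I) (g h : J -> R) :
  \sum_(f : {ffun I -> J}) (\prod_i w i (f i)) * (g (f a) * h (f b)) =
  if a == b then \sum_j w a j * (g j * h j)
  else (\sum_j w a j * g j) * (\sum_j w b j * h j).
Proof.
pose F i j := w i j * (if i == a then g j else 1) * (if i == b then h j else 1).
have sel (k : I) (x : I -> R) : \prod_i (if i == k then x i else 1) = x k.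
  by rewrite -big_mkcond big_pred1_eq.
have -> : \sum_(f : {ffun I -> J}) (\prod_i w i (f i)) * (g (f a) * h (f b))
    = \sum_(f : {ffun I -> J}) \prod_i F i (f i).
  apply: eq_bigr => f _; rewrite !big_split /=.
  by rewrite (sel a (fun i => g (f i))) (sel b (fun i => h (f i))) mulrA.
have F1 i : i != a -> i != b -> \sum_j F i j = 1.
  move=> /negbTE ia /negbTE ib; rewrite -(w1 i).
  by apply: eq_bigr => j _; rewrite /F ia ib !mulr1.
rewrite -bigA_distr_bigA (bigD1 a) //=.
case: eqVneq => [eab|nab].
  subst b; rewrite [X in _ * X]big1 ?mulr1 => [|i ia]; last exact: F1.
  by apply: eq_bigr => j _; rewrite /F eqxx mulrA.
rewrite (bigD1 b) 1?eq_sym //= [X in _ * (_ * X)]big1 ?mulr1 => [|i /andP[ia ib]];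
  last exact: F1.
by congr (_ * _); apply: eq_bigr => j _; rewrite /F eqxx ?[b == a]eq_sym (negbTE nab) mulr1.
Qed.

Lemma sum_diag_const (R : comNzRingType) (m : nat) (c : R) :
  \sum_(i < m) \sum_(j < m) (if i == j then 1 else c) = m%:R * (1 - c) + m%:R ^+ 2 * c.
Proof.
have row (i : 'I_m) : \sum_(j < m) (if i == j then 1 else c) = 1 - c + m%:R * c.
  rewrite (bigD1 i) //= eqxx (eq_bigr (fun=> c)) => [|j /negbTE]; last by rewrite eq_sym => ->.
  rewrite sumr_const cardC1 card_ord -mulr_natl.
  by case: m i => [[]//|m] _ /=; rewrite -natr1; ring.
rewrite (eq_bigr _ (fun i _ => row i)) sumr_const card_ord -mulr_natl; ring.
Qed.

Lemma sum_collision_harmonic (R : numFieldType) (N : nat) :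
  \sum_(i < N) \sum_(j < N)
     (if i == j :> nat then 1 else ((maxn i j).+1%:R)^-1 : R)
  = 3 * N%:R - 2 * series harmonic N.
Proof.
elim: N => [|N IH]; first by rewrite !big_ord0 seriesEord /= big_ord0; ring.
have sumN (F : 'I_N -> R) : (forall i, F i = N.+1%:R^-1) -> \sum_i F i = N%:R / N.+1%:R.
  by move=> eF; rewrite (eq_bigr _ (fun i _ => eF i)) sumr_const card_ord mulr_natl.
have rowN : \sum_(j < N) (if N == j :> nat then 1 else (maxn N j).+1%:R^-1 : R)
    = N%:R / N.+1%:R.
  by apply: sumN => j; rewrite gtn_eqF // (maxn_idPl (ltnW (ltn_ord j))).
have colN : \sum_(i < N) (if i == N :> nat then 1 else (maxn i N).+1%:R^-1 : R)
    = N%:R / N.+1%:R.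
  by apply: sumN => i; rewrite ltn_eqF // (maxn_idPr (ltnW (ltn_ord i))).
rewrite big_ord_recr /=.
under eq_bigr => i _ do rewrite big_ord_recr /=.
rewrite big_split /= IH colN big_ord_recr /= rowN eqxx seriesSr /=.
have hN : (N.+1%:R : R) != 0 by rewrite pnatr_eq0.
by rewrite -natr1 in hN *; field.
Qed.

Lemma walk_sqr_mean {R : realType} (p : R) {n m : nat} : (m <= n.-1)%N ->
  \sum_(eps : {ffun 'I_n.-1 -> bool}) step_prob p eps * walk_pos R eps m ^+ 2
  = m%:R * (1 - (2 * p - 1) ^+ 2) + m%:R ^+ 2 * (2 * p - 1) ^+ 2.
Proof.
move=> hm.
pose w (i : 'I_n.-1) (b : bool) : R := if b then p else 1 - p.
pose x (b : bool) : R := if b then 1 else -1.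
pose ix (i : 'I_m) := widen_ord hm i.
have w1 i : \sum_b w i b = 1 by rewrite big_bool /w /=; ring.
have pair (i j : 'I_m) :
    \sum_eps step_prob p eps * (x (eps (ix i)) * x (eps (ix j)))
    = if i == j then 1 else (2 * p - 1) ^+ 2.
  rewrite [LHS](sum_prod_weight_pair w1) !big_bool /w /x /=.
  by rewrite -[ix i == ix j]/(i == j) /=; case: eqP => _; ring.
under eq_bigr => eps _ do
  rewrite /walk_pos big_ord_narrow expr2 big_distrlr mulr_sumr /=.
rewrite exchange_big -sum_diag_const; apply: eq_bigr => i _.
under eq_bigr => eps _ do rewrite mulr_sumr.
by rewrite exchange_big; apply: eq_bigr => j _; exact: pair.
Qed.

Section RandomRecursiveTree.
Variables (R : realType) (n : nat).

Definition attach_weight (i : 'I_n.-1) (v : 'I_n) : R := (v <= i)%:R / i.+1%:R.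

Lemma sum_ord_leq_indicator (c : nat) : (c < n)%N -> \sum_(v < n) ((v <= c)%:R : R) = c.+1%:R.
Proof.
move=> cn; rewrite (eq_bigr (fun v : 'I_n => if (v < c.+1)%N then 1 else 0)); last first.
  by move=> v _; rewrite ltnS; case: leqP.
by rewrite -big_mkcond (big_ord_narrow cn) sumr_const card_ord.
Qed.

Lemma attach_weight_sum1 (i : 'I_n.-1) : \sum_v attach_weight i v = 1.
Proof.
have i_n : (i < n)%N by apply: leq_trans (ltn_ord i) (leq_pred n).
by rewrite -mulr_suml sum_ord_leq_indicator // divff // pnatr_eq0.
Qed.

Lemma rrt_probE (u : {ffun 'I_n.-1 -> 'I_n}) :
  rrt_prob R u = \prod_i attach_weight i (u i).
Proof.
rewrite /rrt_prob /attach_weight; case: ifP => [/forallP valid | /negbT].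
  by apply: eq_bigr => i _; rewrite valid mul1r.
rewrite negb_forall => /existsP[i invalid].
by rewrite (bigD1 i) //= (negbTE invalid) !mul0r.
Qed.

Lemma rrt_prob_sum1 : \sum_(u : {ffun 'I_n.-1 -> 'I_n}) rrt_prob R u = 1.
Proof.
under eq_bigr => u _ do rewrite rrt_probE.
by rewrite -bigA_distr_bigA big1 // => i _; apply: attach_weight_sum1.
Qed.

Lemma outdegE (u : {ffun 'I_n.-1 -> 'I_n}) (c : 'I_n) :
  (outdeg u c.+1)%:R = \sum_i ((u i == c)%:R : R).
Proof.
rewrite /outdeg -sum1dep_card natr_sum big_mkcond /=.
by apply: eq_bigr => i _; rewrite -[u i == c]/(u i == c.+1.-1 :> nat); case: (_ == _).
Qed.

Lemma sum_outdeg (u : {ffun 'I_n.-1 -> 'I_n}) :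
  \sum_(1 <= k < n.+1) ((outdeg u k)%:R : R) = n.-1%:R.
Proof.
rewrite big_add1 /= big_mkord.
under eq_bigr => c _ do rewrite outdegE.
rewrite exchange_big /= (eq_bigr (fun=> 1)) => [|i _]; first by rewrite sumr_const card_ord.
by rewrite (bigD1 (u i)) //= eqxx big1 ?addr0 // => c /negbTE; rewrite eq_sym => ->.
Qed.

Lemma sum_outdeg_sqr (u : {ffun 'I_n.-1 -> 'I_n}) :
  \sum_(1 <= k < n.+1) ((outdeg u k)%:R : R) ^+ 2
  = \sum_(c < n) \sum_i \sum_j ((u i == c)%:R * (u j == c)%:R).
Proof.
rewrite big_add1 /= big_mkord; apply: eq_bigr => c _.
by rewrite outdegE expr2 big_distrlr.
Qed.

Lemma attach_weight_collision (i j : 'I_n.-1) :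
  \sum_c attach_weight i c * attach_weight j c = (maxn i j).+1%:R^-1.
Proof.
have ij_n : (minn i j < n)%N.
  by apply: leq_ltn_trans (geq_minl i j) (leq_trans (ltn_ord i) (leq_pred n)).
under eq_bigr => c _ do
  rewrite /attach_weight mulrACA -natrM mulnb -leq_min -invfM.
rewrite -mulr_suml sum_ord_leq_indicator // /minn /maxn -!natr1.
have i0 : (i%:R + 1 : R) != 0 by rewrite natr1 pnatr_eq0.
have j0 : (j%:R + 1 : R) != 0 by rewrite natr1 pnatr_eq0.
by case: (i < j)%N; field; rewrite i0 j0.
Qed.

Lemma mean_sum_outdeg_sqr :
  \sum_(u : {ffun 'I_n.-1 -> 'I_n}) rrt_prob R u *
     \sum_(1 <= k < n.+1) ((outdeg u k)%:R : R) ^+ 2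
  = 3 * n.-1%:R - 2 * series harmonic n.-1.
Proof.
have pick (f : 'I_n -> R) (c : 'I_n) : \sum_v f v * (v == c)%:R = f c.
  by rewrite (bigD1 c) //= eqxx mulr1 big1 ?addr0 // => v /negbTE ->; rewrite mulr0.
have pair (c : 'I_n) (i j : 'I_n.-1) :
    \sum_(u : {ffun 'I_n.-1 -> 'I_n}) rrt_prob R u * ((u i == c)%:R * (u j == c)%:R)
    = if i == j then attach_weight i c else attach_weight i c * attach_weight j c.
  under eq_bigr => u _ do rewrite rrt_probE.
  pose at_c (v : 'I_n) : R := (v == c)%:R.
  rewrite (sum_prod_weight_pair attach_weight_sum1 i j at_c at_c) !pick.
  case: eqP => // _.
  by under eq_bigr => v _ do rewrite /at_c -natrM mulnb andbb; rewrite pick.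
transitivity (\sum_c \sum_i \sum_j \sum_(u : {ffun 'I_n.-1 -> 'I_n})
                rrt_prob R u * (((u i == c)%:R : R) * (u j == c)%:R)).
  under eq_bigr => u _ do rewrite sum_outdeg_sqr mulr_sumr.
  rewrite exchange_big; apply: eq_bigr => c _.
  under eq_bigr => u _ do rewrite mulr_sumr.
  rewrite exchange_big; apply: eq_bigr => i _.
  under eq_bigr => u _ do rewrite mulr_sumr.
  by rewrite exchange_big.
rewrite -sum_collision_harmonic exchange_big; apply: eq_bigr => i _.
under eq_bigr => c _ do under eq_bigr => j _ do rewrite pair.
rewrite exchange_big; apply: eq_bigr => j _.
rewrite -[i == j :> nat]/(i == j).
by case: ifP => _; [exact: attach_weight_sum1 | exact: attach_weight_collision].
Qed.

End RandomRecursiveTree.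

Lemma ES2E (R : realType) (p : R) (n k : nat) :
  ES2 p n k = \sum_(u : {ffun 'I_n.-1 -> 'I_n}) rrt_prob R u *
    ((outdeg u k)%:R * (1 - (2 * p - 1) ^+ 2) + (outdeg u k)%:R ^+ 2 * (2 * p - 1) ^+ 2).
Proof.
apply: eq_bigr => u _.
have dk : (outdeg u k <= n.-1)%N by rewrite -[n.-1]card_ord max_card.
rewrite -(walk_sqr_mean p dk) mulr_sumr; apply: eq_bigr => eps _.
by rewrite mulrA [_ * step_prob _ _]mulrC.
Qed.

Lemma sum_ES2 (R : realType) (p : R) (n : nat) :
  \sum_(1 <= k < n.+1) ES2 p n k
  = n.-1%:R * (1 + 2 * (2 * p - 1) ^+ 2) - 2 * (2 * p - 1) ^+ 2 * series harmonic n.-1.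
Proof.
set a := (2 * p - 1) ^+ 2.
under eq_bigr => k _ do rewrite ES2E -/a.
have per_tree (u : {ffun 'I_n.-1 -> 'I_n}) :
    \sum_(1 <= k < n.+1) rrt_prob R u * ((outdeg u k)%:R * (1 - a) + (outdeg u k)%:R ^+ 2 * a)
    = (1 - a) * n.-1%:R * rrt_prob R u
      + a * (rrt_prob R u * \sum_(1 <= k < n.+1) ((outdeg u k)%:R : R) ^+ 2).
  by rewrite -mulr_sumr big_split /= -!mulr_suml sum_outdeg; ring.
rewrite exchange_big /=; under eq_bigr => u _ do rewrite per_tree.
by rewrite big_split /= -!mulr_sumr rrt_prob_sum1 mean_sum_outdeg_sqr; ring.
Qed.

Lemma inv_le_ln_ratio (R : realType) {N : nat} : (0 < N)%N ->
  N.+1%:R^-1 <= ln (N.+1%:R : R) - ln N%:R.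
Proof.
move=> N0.
have ltN : (-1 : R) < - N.+1%:R^-1 by rewrite ltrN2 invf_lt1 ?ltr0n // ltr1n ltnS.
have ratio : 1 - N.+1%:R^-1 = N%:R / N.+1%:R :> R.
  by rewrite -natr1; field; rewrite natr1 pnatr_eq0.
have := le_ln1Dx ltN; rewrite ratio ln_div ?posrE ?ltr0n //.
by rewrite -lerN2 opprB.
Qed.

Lemma harmonic_le_1Dln (R : realType) (N : nat) :
  series harmonic N.+1 <= 1 + ln (N.+1%:R : R).
Proof.
elim: N => [|N IH]; first by rewrite seriesEord /= big_ord1 ln1 invr1 addr0.
rewrite seriesSr /=.
have := inv_le_ln_ratio R (ltn0Sn N); set c := (N.+2%:R^-1 : R); lra.
Qed.

Theorem lemma2p3 (R : realType) (p1 : R) (hp0 : 0 <= p1) (hp1 : p1 <= 1) :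
  exists (C : R) (N : nat), forall n : nat, (N <= n)%N ->
    `| \sum_(1 <= k < n.+1) ES2 p1 n k
       - n%:R * (1 + 2 * (2 * p1 - 1) ^+ 2) | <= C * (ln (n%:R : R)) ^+ 2.
Proof.
exists 24, 2%N => -[|[|m]] // _.
rewrite sum_ES2 [m.+2.-1]/=.
have a_ge0 : 0 <= (2 * p1 - 1) ^+ 2 := sqr_ge0 _.
have a_le1 : (2 * p1 - 1) ^+ 2 <= 1 by rewrite expr2; nra.
have H_ge0 : 0 <= series harmonic m.+1 :> R.
  by rewrite seriesEord /=; apply: sumr_ge0 => i _; exact: harmonic_ge0.
have H_le := harmonic_le_1Dln R m.
have ln_le : ln (m.+1%:R : R) <= ln m.+2%:R by rewrite ler_ln ?posrE ?ltr0n ?ler_nat.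
have ln_ge : 1 / 2 <= ln (m.+2%:R : R).
  have := inv_le_ln_ratio R (ltn0Sn 0); rewrite ln1 subr0 div1r => ln2.
  by apply: le_trans ln2 _; rewrite ler_ln ?posrE ?ltr0n ?ler_nat.
set a := (2 * p1 - 1) ^+ 2 in a_ge0 a_le1 *.
set H := series harmonic m.+1 in H_ge0 H_le *.
set L := ln m.+2%:R in ln_ge ln_le *.
have aH_le : a * H <= H by rewrite ler_piMl.
have L_sqr : 5 + 2 * L <= 24 * L ^+ 2 by rewrite expr2; nra.
rewrite -[m.+2%:R]natr1 ler_norml; apply/andP; split; nra.
Qed.
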